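(* Let $\mathcal{X},\mathcal{Y}$ be finite sets, $P_X$ a probability distribution on $\mathcal{X}$, $d:\mathcal{X}\times\mathcal{Y}\to[0,\infty)$, $Q_Y$ a probability distribution on $\mathcal{Y}$, and $w\in(0,1]$. For $x\in\mathcal{X}$ define $$W^w_{Y|X=x}(y)=w^{-1}\,Q_Y(y)\,\Pr_U\big[p_{c,x,y,U}\le w\big],\qquad y\in\mathcal{Y},$$ where $U$ is uniform on $[0,1]$. Then for every $x$, $W^w_{Y|X=x}$ is a probability distribution on $\mathcal{Y}$, and $$\tilde D(w,Q_Y)=\mathbb{E}_{P_X\times W^w_{Y|X}}[d(X,Y)].$$
   Context: $p_{c,x,y,u}=Q_Y\{y': d(x,y')<d(x,y)\}+u\cdot Q_Y\{y': d(x,y')=d(x,y)\}$. $\tilde D(w,Q_Y)=w^{-1}\,\mathbb{E}[d(X,Y)\mathbf{1}\{p_{c,X,Y,U}\le w\}]$ with $X\sim P_X$, $Y\sim Q_Y$, $U$ uniform on $[0,1]$ independent. $P_X\times W_{Y|X}$ denotes the joint law with $X\sim P_X$ and $Y$ given $X=x$ distributed as $W_{Y|X=x}$. *)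

From HB Require Import structures.
From mathcomp Require Import all_boot all_order all_algebra.
From mathcomp Require Import all_classical all_reals all_analysis.
Set Implicit Arguments. Unset Strict Implicit. Unset Printing Implicit Defensive.
Import Order.TTheory GRing.Theory Num.Theory.
Local Open Scope classical_set_scope.
Local Open Scope ring_scope.

Section Defs.
Variables (R : realType) (X Y : finType).

Definition is_dist (T : finType) (P : T -> R) : Prop :=
  (forall t, 0 <= P t) /\ \sum_(t : T) P t = 1.

Definition p_c (Q : Y -> R) (d : X -> Y -> R) (x : X) (y : Y) (u : R) : R :=
  \sum_(y' | d x y' < d x y) Q y' + u * \sum_(y' | d x y' == d x y) Q y'.

Definition PrU (A : set R) : R :=
  fine ((@lebesgue_measure R) (`[0%R, 1%R] `&` A)).

Definition Ww (Q : Y -> R) (d : X -> Y -> R) (w : R) (x : X) (y : Y) : R :=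
  w^-1 * Q y * PrU [set u | p_c Q d x y u <= w].

(* D~(w,Q) = w^{-1} E[d(X,Y) 1{p_{c,X,Y,U} <= w}], X ~ P, Y ~ Q, U ~ Unif[0,1]
   independent: the expectation over the product law, written as the finite
   sums over x, y of the Lebesgue integral over u in [0,1]. *)
Definition Dtilde (P : X -> R) (Q : Y -> R) (d : X -> Y -> R) (w : R) : R :=
  w^-1 * \sum_(x : X) \sum_(y : Y) P x * Q y *
    Rintegral (@lebesgue_measure R) `[0%R, 1%R]
      (fun u : R => d x y * ((p_c Q d x y u <= w)%R : bool)%:R).

End Defs.

From HB Require Import structures.
From mathcomp Require Import all_boot all_order all_algebra.
From mathcomp Require Import all_classical all_reals all_analysis.
From mathcomp Require Import measurable_realfun ring.
Set Implicit Arguments. Unset Strict Implicit. Unset Printing Implicit Defensive.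
Import Order.TTheory GRing.Theory Num.Theory.
Local Open Scope classical_set_scope.
Local Open Scope ring_scope.

(* For fixed x, let lo(y) = Q{d(x,.) < d(x,y)} and b(y) = Q{d(x,.) = d(x,y)}.
   Then p_{c,x,y,u} = lo(y) + u b(y) is affine in u, so
   Pr_U[p <= w] = (min(w, lo(y) + b(y)) - min(w, lo(y))) / b(y).
   The weights Q(y) / b(y) sum to 1 on each level set of d(x,.), and the
   levels, in increasing order, cut [0,1] into consecutive intervals
   [lo, lo + b]; hence sum_y Q(y) Pr_U[p <= w] telescopes to
   min(w,1) - min(w,0) = w.  The formula for D~ only needs
   int_0^1 1{p_{c,x,y,u} <= w} du = Pr_U[p <= w]. *)

Section level_masses.
Variables (R : realType) (T : finType) (Q g : T -> R).

Definition level (S : {set T}) (v : R) := [set y in S | g y == v].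
Definition mass_below (S : {set T}) (y : T) := \sum_(y' in S | g y' < g y) Q y'.
Definition mass_level (S : {set T}) (y : T) := \sum_(y' in S | g y' == g y) Q y'.

Lemma mass_below_setD_level (S : {set T}) (v : R) (y : T) : g y <= v ->
  mass_below (S :\: level S v) y = mass_below S y.
Proof.
move=> le_yv; apply: eq_bigl => y'; rewrite !inE.
case: (y' \in S); rewrite ?andbF //= andbT.
case: (boolP (g y' < g y)) => [lt_y'y|]; rewrite ?andbF // andbT.
by rewrite (lt_eqF (lt_le_trans lt_y'y le_yv)).
Qed.

Lemma mass_level_setD_level (S : {set T}) (v : R) (y : T) : g y != v ->
  mass_level (S :\: level S v) y = mass_level S y.
Proof.
move=> ne_yv; apply: eq_bigl => y'; rewrite !inE.
case: (y' \in S); rewrite ?andbF //= andbT.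
by case: (boolP (g y' == g y)) => [/eqP ->|]; rewrite ?andbF ?andbT.
Qed.

Lemma mass_below_top_level (S : {set T}) (v : R) (y : T) : {in S, forall y', g y' <= v} ->
  y \in level S v -> mass_below S y = \sum_(y' in S :\: level S v) Q y'.
Proof.
move=> le_Sv; rewrite inE => /andP[_ /eqP gy].
apply: eq_bigl => y'; rewrite !inE gy.
case: (boolP (y' \in S)) => [y'S|]; rewrite ?andbF ?andbT //=.
by rewrite lt_def (le_Sv _ y'S) andbT eq_sym.
Qed.

Lemma mass_level_level (S : {set T}) (v : R) (y : T) :
  y \in level S v -> mass_level S y = \sum_(y' in level S v) Q y'.
Proof. by rewrite inE => /andP[_ /eqP gy]; apply: eq_bigl => y'; rewrite !inE gy. Qed.

(* Induction on #|S|: removing the top level M of g from S, the terms over M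
   add up to phi (sum_S Q) - phi (sum_(S :\: M) Q). *)
Lemma telescope_mass_levels (phi : R -> R) (S : {set T}) :
  \sum_(y in S) Q y / mass_level S y *
      (phi (mass_below S y + mass_level S y) - phi (mass_below S y))
    = phi (\sum_(y in S) Q y) - phi 0.
Proof.
have [n] := ubnP #|S|; elim: n S => // n IH S /ltnSE cardS.
have [->|[y1 y1S]] := set_0Vmem S; first by rewrite !big_set0 subrr.
have [y0 y0S le_Sy0] : exists2 y0, y0 \in S & {in S, forall y, g y <= g y0}.
  by have [y0 ? ?] := arg_maxP g y1S; exists y0.
set M := level S (g y0); set S' := S :\: M.
have y0M : y0 \in M by rewrite inE y0S eqxx.
have ltS' : (#|S'| < #|S|)%N.
  apply/proper_card/properP; split; first exact: subsetDl.
  by exists y0; rewrite // inE y0M.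
have splitS (F : T -> R) : \sum_(y in S) F y = \sum_(y in S') F y + \sum_(y in M) F y.
  have sub_MS : M \subset S by apply/fintype.subsetP => y; rewrite inE => /andP[].
  by rewrite (big_setID M) addrC (finset.setIidPr sub_MS).
have lt_S'y0 y : y \in S' -> g y < g y0.
  by case/setDP=> yS; rewrite inE yS /= lt_neqAle => ->; rewrite le_Sy0.
rewrite (splitS Q) splitS.
set B := \sum_(y in M) Q y; set T' := \sum_(y in S') Q y.
have -> : \sum_(y in M) Q y / mass_level S y *
    (phi (mass_below S y + mass_level S y) - phi (mass_below S y))
    = B / B * (phi (T' + B) - phi T').
  rewrite big_distrl big_distrl /=; apply: eq_bigr => y yM.
  by rewrite (mass_below_top_level le_Sy0 yM) ?(mass_level_level yM).
have -> : phi (T' + B) - phi 0 = (phi T' - phi 0) + (phi (T' + B) - phi T').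
  by rewrite [RHS]addrC addrA subrK.
rewrite -(IH S') ?(leq_trans ltS') //.
congr (_ + _).
- apply: eq_bigr => y /lt_S'y0 lt_yy0.
  by rewrite -(mass_below_setD_level S (ltW lt_yy0))
             -(mass_level_setD_level S (negbT (lt_eqF lt_yy0))).
- by have [->|B0] := eqVneq B 0; rewrite ?addr0 ?subrr ?mulr0 // divff ?mul1r.
Qed.

End level_masses.

Section uniform.
Variable R : realType.

Lemma PrU_affine_le (a b w : R) : 0 < b ->
  PrU [set u | a + u * b <= w] = (Num.min w (a + b) - Num.min w a) / b.
Proof.
move=> b0; rewrite /PrU.
have [lt_wa|le_aw] := ltP w a.
  have -> : `[0, 1] `&` [set u | a + u * b <= w] = set0.
    apply/seteqP; split => u //= []; rewrite in_itv /= => /andP[u0 _] h.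
    by move: lt_wa; rewrite ltNge (le_trans _ h) // lerDl mulr_ge0 // ltW.
  have le_wab : w <= a + b by rewrite ltW // (lt_le_trans lt_wa) // lerDl ltW.
  by rewrite measure0 (min_l le_wab) subrr mul0r.
have [le_wab|lt_abw] := leP w (a + b).
  set c := (w - a) / b.
  have c0 : 0 <= c by rewrite divr_ge0 ?subr_ge0 // ltW.
  have -> : `[0, 1] `&` [set u | a + u * b <= w] = `[0, c]%classic.
    apply/seteqP; split => u /=; rewrite !in_itv /= /c ler_pdivlMr // lerBrDl.
      by case=> /andP[-> _].
    move=> /andP[u0 h]; split=> //; rewrite u0 -(ler_pM2r b0) mul1r -(lerD2l a).
    exact: le_trans h le_wab.
  rewrite lebesgue_measure_itv /= lte_fin oppr0 addr0.
  by case: ltP => // c_le0; apply/le_anti; rewrite c0 c_le0.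
have -> : `[0, 1] `&` [set u | a + u * b <= w] = `[0, 1]%classic.
  apply/seteqP; split => u /=; first by case.
  move=> u01; split => //; move: u01; rewrite in_itv /= => /andP[u0 u1].
  by rewrite (le_trans _ (ltW lt_abw)) // lerD2l ler_piMl // ltW.
rewrite lebesgue_measure_itv /= lte_fin ltr01 /= oppr0 addr0.
by rewrite [a + b]addrC addrK divff // gt_eqF.
Qed.

Lemma measurable_affine_le (a b w : R) : measurable [set u : R | a + u * b <= w].
Proof.
have := measurable_fun_ler
  (measurable_funD (measurable_cst a)
     (measurable_funM (@measurable_id _ R setT) (measurable_cst b)))
  (measurable_cst w) measurableT.
by move=> /(_ [set true] I); rewrite setTI.
Qed.

Lemma Rintegral_scaled_indicator (c : R) (p : pred R) : measurable [set u | p u] ->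
  Rintegral (@lebesgue_measure R) `[0%R, 1%R] (fun u => c * (p u)%:R)
    = c * PrU [set u | p u].
Proof.
move=> mp; rewrite -Rintegral_cst; last exact: measurableI.
rewrite [RHS]Rintegral_mkcondr; apply: eq_Rintegral => u _; rewrite /patch.
have [pu|npu] := boolP (p u).
- by rewrite mem_set ?mulr1.
- by rewrite memNset /= ?mulr0 //; exact/negP.
Qed.

End uniform.

Section test_channel.
Variables (R : realType) (X Y : finType) (Q : Y -> R) (d : X -> Y -> R).
Hypothesis Q_dist : is_dist Q.

Lemma p_c_mass x y u :
  p_c Q d x y u = mass_below Q (d x) [set: Y] y + u * mass_level Q (d x) [set: Y] y.
Proof. by congr (_ + _ * _); apply: eq_bigl => y'; rewrite inE. Qed.

Lemma mul_PrU_p_c_le x y w : Q y * PrU [set u | p_c Q d x y u <= w] =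
  Q y / mass_level Q (d x) [set: Y] y *
    (Num.min w (mass_below Q (d x) [set: Y] y + mass_level Q (d x) [set: Y] y)
     - Num.min w (mass_below Q (d x) [set: Y] y)).
Proof.
have [->|Qy_neq0] := eqVneq (Q y) 0; first by rewrite !mul0r.
have level_gt0 : 0 < mass_level Q (d x) [set: Y] y.
  have Qy_gt0 : 0 < Q y by rewrite lt_def Qy_neq0 Q_dist.1.
  apply: (lt_le_trans Qy_gt0).
  rewrite /mass_level (bigD1 y) ?inE ?eqxx //= lerDl.
  by apply: sumr_ge0 => i _; exact: Q_dist.1.
under eq_set do rewrite p_c_mass.
by rewrite PrU_affine_le // mulrA [_ / _ * _]mulrAC.
Qed.

Lemma Ww_dist w x : 0 < w -> w <= 1 -> is_dist (Ww Q d w x).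
Proof.
move=> w_gt0 w_le1; split=> [y|].
  by rewrite !mulr_ge0 ?invr_ge0 ?(ltW w_gt0) ?Q_dist.1 ?fine_ge0 ?measure_ge0.
under eq_bigr do rewrite /Ww -mulrA mul_PrU_p_c_le.
have sum_setT (F : Y -> R) : \sum_(y in [set: Y]%SET) F y = \sum_y F y.
  by apply: eq_bigl => y; rewrite inE.
rewrite -big_distrr /= -sum_setT (telescope_mass_levels Q (d x) (Num.min w)) sum_setT.
by rewrite Q_dist.2 (min_l w_le1) (min_r (ltW w_gt0)) subr0 mulVf ?gt_eqF.
Qed.

End test_channel.

Theorem proposition2 (R : realType) (X Y : finType)
  (P : X -> R) (Q : Y -> R) (d : X -> Y -> R) (w : R) :
  is_dist P -> is_dist Q -> (forall x y, 0 <= d x y) ->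
  0 < w -> w <= 1 ->
  (forall x, is_dist (Ww Q d w x)) /\
  Dtilde P Q d w = \sum_(x : X) \sum_(y : Y) P x * Ww Q d w x y * d x y.
Proof.
move=> _ Q_dist _ w_gt0 w_le1; split=> [x|]; first exact: Ww_dist.
rewrite /Dtilde big_distrr; apply: eq_bigr => x _.
rewrite big_distrr; apply: eq_bigr => y _.
rewrite Rintegral_scaled_indicator; last first.
  by under eq_set do rewrite p_c_mass; exact: measurable_affine_le.
by rewrite /= /Ww; ring.
Qed.
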